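(* Let $n \ge 3$ and $k = \lceil \log_2 n \rceil$. Then $\det'(Q_n) = k$ if $2^{k-1} < n \le 2^{k-1} + k$, and $\det'(Q_n) = k+1$ if $2^{k-1} + k < n \le 2^k$.
   Context: $Q_n$ is the $n$-dimensional hypercube: its vertices are the binary strings of length $n$, two being adjacent iff they differ in exactly one bit. For a graph $G$ with at most one isolated vertex and no component isomorphic to $K_2$, an edge subset $T$ is an edge determining set if the only automorphism $\phi$ of $G$ satisfying $\{\phi(u),\phi(v)\}=\{u,v\}$ for all $\{u,v\}\in T$ is the identity; the determining index $\det'(G)$ is the minimum size of an edge determining set. *)

From mathcomp Require Import all_boot all_order all_fingroup.
Set Implicit Arguments. Unset Strict Implicit. Unset Printing Implicit Defensive.

Definition qvert (n : nat) := {ffun 'I_n -> bool}.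

Definition qadj (n : nat) (u v : qvert n) : bool :=
  #|[set i : 'I_n | u i != v i]| == 1.

Definition qedges (n : nat) : {set {set qvert n}} :=
  [set e : {set qvert n} | [exists u, exists v, qadj u v && (e == [set u; v])]].

Definition qaut (n : nat) (f : {perm qvert n}) : bool :=
  [forall u, forall v, qadj (f u) (f v) == qadj u v].

Definition edge_determining (n : nat) (T : {set {set qvert n}}) : bool :=
  (T \subset qedges n) &&
  [forall f : {perm qvert n},
     (qaut f && [forall e in T, f @: e == e]) ==> (f == 1%g)].

(* Determining index det'(Q_n): the minimum size of an edge determining set
   (the default value #|E(Q_n)| is attained by E(Q_n) itself when it is
   determining, so this is the true minimum whenever one exists). *)
Definition det_index (n : nat) : nat :=
  \big[minn/#|qedges n|]_(T : {set {set qvert n}} | edge_determining T) #|T|.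

(* Every automorphism of Q_n is x |-> (x o s) + t for a coordinate permutation
   s and a translation t.  If edges e_1, ..., e_m are fixed setwise, then each
   coordinate c that is not a direction of some e_i is constant along every
   e_i, and is recorded, relative to a base vertex of e_1, by the set of e_i
   on which it differs from that vertex: a subset of {e_2, ..., e_m}.  Two
   coordinates with the same record can be swapped (together with a
   translation) without moving any e_i, so a determining set needs
   n - m <= 2^(m-1).  Conversely, m edges in the first m directions whose base
   vertices give the remaining coordinates distinct binary codes determine Q_n
   as soon as n <= 2^(m-1) + m.  Hence det'(Q_n) is the least m
   with n <= 2^(m-1) + m. *)

From mathcomp Require Import all_boot all_order all_fingroup zify.
Set Implicit Arguments. Unset Strict Implicit. Unset Printing Implicit Defensive.

Section Hypercube.

Variable n : nat.
Implicit Types (u v w x y : qvert n) (a b c : 'I_n).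

Definition flip a x : qvert n := [ffun i => x i (+) (i == a)].

Definition qzero : qvert n := [ffun => false].

Lemma flipE a x i : flip a x i = x i (+) (i == a).
Proof. by rewrite ffunE. Qed.

Lemma flipK a : involutive (flip a).
Proof. by move=> x; apply/ffunP => i; rewrite !flipE -addbA addbb addbF. Qed.

Lemma flip_neq a x : flip a x != x.
Proof. by apply/eqP => /ffunP /(_ a); rewrite flipE eqxx; case: (x a). Qed.

Lemma flip_idx_inj x : injective (flip^~ x).
Proof.
move=> a b /ffunP /(_ a); rewrite !flipE eqxx.
by case: (x a); case: eqP => //= ->.
Qed.

Lemma flip_flip_idx a b x : flip a (flip b x) = x -> a = b.
Proof. by move=> E; apply: (@flip_idx_inj (flip b x)); rewrite /= E flipK. Qed.

Lemma qzeroVbit x : x = qzero \/ exists a, x a.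
Proof.
case: (pickP [pred i | x i]) => [a xa | x0]; first by right; exists a.
by left; apply/ffunP => i; rewrite ffunE; apply: x0.
Qed.

Lemma qadjP u v : reflect (exists a, v = flip a u) (qadj u v).
Proof.
apply: (iffP cards1P) => [[a /setP uv] | [a ->]].
  exists a; apply/ffunP => i; have := uv i; rewrite !inE flipE /=.
  by case: (u i); case: (v i); case: (i == a).
by exists a; apply/setP => i; rewrite !inE flipE; case: (u i); case: (i == a).
Qed.

Lemma qadj_sym u v : qadj u v = qadj v u.
Proof. by congr (_ == 1); apply: eq_card => i; rewrite !inE eq_sym. Qed.

Lemma common_neighbours a b y w : a != b ->
  qadj y w -> qadj (flip b (flip a y)) w -> w = flip a y \/ w = flip b y.
Proof.
move=> ab /qadjP [c ->] /qadjP [d /ffunP Ed].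
have := Ed a; have := Ed b; rewrite !flipE eqxx (eq_sym b) (negbTE ab) eqxx.
case: (eqVneq c a) => [-> | ca]; first by left.
case: (eqVneq d a) => [-> | da]; last by case: (y a).
case: (eqVneq c b) => [-> | cb]; first by right.
by rewrite eq_sym (negbTE ab); case: (y b).
Qed.

Lemma eq_edge_dir a b u v : [set u; flip a u] = [set v; flip b v] -> a = b.
Proof.
move=> E.
have : u \in [set v; flip b v] by rewrite -E setU11.
have : flip a u \in [set v; flip b v] by rewrite -E setU1r ?set11.
rewrite !inE => /orP [] /eqP E1 /orP [] /eqP E2; move: E1; rewrite E2.
- by move/eqP; rewrite (negbTE (flip_neq _ _)).
- by move/flip_flip_idx.
- by move/flip_idx_inj.
- by move/eqP; rewrite (negbTE (flip_neq _ _)).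
Qed.

Lemma qedgesP e : e \in qedges n -> exists u a, e = [set u; flip a u].
Proof.
rewrite inE => /existsP [u /existsP [v /andP [/qadjP [a ->] /eqP ->]]].
by exists u, a.
Qed.

Lemma edge_coord a u x y c :
  x \in [set u; flip a u] -> y \in [set u; flip a u] -> x c != y c -> c = a.
Proof.
rewrite !inE => /orP [] /eqP -> /orP [] /eqP ->; rewrite ?eqxx // flipE;
  by case: (eqVneq c a) => //; rewrite addbF eqxx.
Qed.

End Hypercube.

Section Automorphisms.

Variable n : nat.
Implicit Types (u v x y : qvert n) (a b c : 'I_n) (s : {perm 'I_n}).

Definition affine s (t x : qvert n) : qvert n := [ffun c => x (s c) (+) t c].

Lemma affine_adj s t u v : qadj (affine s t u) (affine s t v) = qadj u v.
Proof.
rewrite /qadj.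
have -> : [set c | affine s t u c != affine s t v c] = s @^-1: [set i | u i != v i].
  apply/setP => c; rewrite !inE !ffunE.
  by case: (t c); case: (u (s c)); case: (v (s c)).
by rewrite card_preimset //; apply: perm_inj.
Qed.

Lemma affine_flip s t a x : affine s t (flip a x) = flip ((s^-1)%g a) (affine s t x).
Proof.
apply/ffunP => c; rewrite !ffunE -!addbA (addbC (_ == a)).
by congr (_ (+) (_ (+) _)); apply/eqP/eqP => [<- | ->]; rewrite ?permK ?permKV.
Qed.

Lemma affine_inj s t : injective (affine s t).
Proof.
move=> x y /ffunP E; apply/ffunP => i.
by have := E ((s^-1)%g i); rewrite !ffunE permKV => /addIb.
Qed.

Lemma affine_zero s : affine s (qzero n) (qzero n) = qzero n.
Proof. by apply/ffunP => c; rewrite !ffunE. Qed.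

Lemma affine_fix_edge s t a u :
  affine s t @: [set u; flip a u] = [set u; flip a u] ->
  s a = a /\ (forall c, c != a -> affine s t u c = u c).
Proof.
rewrite imsetU1 imset_set1 affine_flip => E; split.
  by rewrite -{1}(eq_edge_dir E) permKV.
have : affine s t u \in [set u; flip a u] by rewrite -E setU11.
rewrite !inE => /orP [/eqP -> // | /eqP -> c ca].
by rewrite flipE (negbTE ca) addbF.
Qed.

Definition weight x := #|[set i | x i]|.

Lemma weight_flip a x : x a -> weight (flip a x) < weight x.
Proof.
move=> xa; apply: proper_card; rewrite properE; apply/andP; split.
  by apply/subsetP => i; rewrite !inE flipE; case: eqP => [-> | _]; rewrite ?xa ?addbF.
by apply/subsetPn; exists a; rewrite !inE ?flipE ?eqxx ?xa.
Qed.

Lemma weight_ind (P : qvert n -> Prop) :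
  (forall x, (forall y, weight y < weight x -> P y) -> P x) -> forall x, P x.
Proof.
move=> IH x; have [w] := ubnP (weight x); elim: w x => // w IHw x lt_x.
by apply: IH => y lt_y; apply: IHw; apply: leq_trans lt_y _.
Qed.

(* An adjacency-preserving injection is determined by the images of the
   vertices of weight at most one: a vertex of weight >= 2 is the only common
   neighbour of two of its lower neighbours that has not been mapped yet. *)
Lemma adj_preserving_affine (g : qvert n -> qvert n) s :
  injective g -> (forall u v, qadj (g u) (g v) = qadj u v) ->
  g (qzero n) = qzero n ->
  (forall a, g (flip a (qzero n)) = flip ((s^-1)%g a) (qzero n)) ->
  g =1 affine s (qzero n).
Proof.
move=> ginj gadj g0 g1; elim/weight_ind => x IH.
have [-> | [a xa]] := qzeroVbit x; first by rewrite g0 affine_zero.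
have x_ya : x = flip a (flip a x) by rewrite flipK.
have [ya0 | [b yab]] := qzeroVbit (flip a x).
  by rewrite x_ya ya0 g1 affine_flip affine_zero.
have ab : a != b by apply: contraTneq yab => <-; rewrite flipE xa eqxx.
have xb : x b by move: yab; rewrite flipE eq_sym (negbTE ab) addbF.
have gya := IH _ (weight_flip xa).
have gyb := IH _ (weight_flip xb).
have gyab : g (flip b (flip a x)) = affine s (qzero n) (flip b (flip a x)).
  by apply: IH; apply: ltn_trans (weight_flip yab) (weight_flip xa).
have ab' : (s^-1)%g a != (s^-1)%g b by rewrite (inj_eq perm_inj).
have adj_a : qadj (affine s (qzero n) (flip a x)) (g x).
  by rewrite -gya gadj qadj_sym; apply/qadjP; exists a.
have adj_b :
    qadj (flip ((s^-1)%g b) (flip ((s^-1)%g a) (affine s (qzero n) (flip a x)))) (g x).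
  by rewrite -!affine_flip flipK -gyb gadj qadj_sym; apply/qadjP; exists b.
case: (common_neighbours ab' adj_a adj_b); rewrite -affine_flip; first by rewrite -x_ya.
rewrite -gyab => /ginj /ffunP /(_ b).
by rewrite flipE eqxx yab xb.
Qed.

Lemma qaut_affine (f : {perm qvert n}) : qaut f ->
  exists s t, forall x, f x = affine s t x.
Proof.
move=> /forallP fa.
have fadj u v : qadj (f u) (f v) = qadj u v by have /forallP/(_ v)/eqP := fa u.
pose t := f (qzero n); pose g x := affine 1 t (f x).
have gadj u v : qadj (g u) (g v) = qadj u v by rewrite affine_adj fadj.
have ginj : injective g by move=> x y /affine_inj /perm_inj.
have g0 : g (qzero n) = qzero n by apply/ffunP => c; rewrite !ffunE perm1 addbb.
have /fin_all_exists [p gp] a : exists b, g (flip a (qzero n)) = flip b (qzero n).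
  by apply/qadjP; rewrite -{1}g0 gadj; apply/qadjP; exists a.
have pinj : injective p.
  by move=> a b E; apply: (@flip_idx_inj _ (qzero n)); apply: ginj; rewrite /= !gp E.
exists (perm pinj)^-1%g, t => x.
have g1 a : g (flip a (qzero n)) = flip ((((perm pinj)^-1)^-1)%g a) (qzero n).
  by rewrite invgK permE gp.
apply/ffunP => c; have /ffunP/(_ c) := adj_preserving_affine ginj gadj g0 g1 x.
by rewrite !ffunE perm1 addbF => <-; rewrite -addbA addbb addbF.
Qed.

End Automorphisms.

(* The largest [n] for which [t] edges can determine [Q_n]. *)
Definition det_capacity (t : nat) : nat := 2 ^ t.-1 + t.

Definition bit (i j : nat) : bool := odd (j %/ 2 ^ i).

Lemma bits_inj k j j' : j < 2 ^ k -> j' < 2 ^ k ->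
  (forall i, i < k -> bit i j = bit i j') -> j = j'.
Proof.
elim: k j j' => [|k IH] j j'.
  by rewrite expn0 !ltnS !leqn0 => /eqP -> /eqP ->.
move=> lt_j lt_j' E.
have E0 := E 0 isT; rewrite /bit expn0 !divn1 in E0.
have Eh : j./2 = j'./2.
  apply: IH; rewrite -?divn2 ?ltn_divLR -?expnSr //.
  by move=> i ik; have := E i.+1 ik; rewrite /bit expnS !divnMA !divn2.
by rewrite -(odd_double_half j) -(odd_double_half j') E0 Eh.
Qed.

Section Construction.

Variables (n m : nat) (mn : m <= n).

(* Edge [r] (r < m) lies in direction [r]; coordinate [c >= m] of its base
   vertex is bit [r-1] of [c - m] (and 0 for r = 0), coordinates [c < m] are 0.
   Across the m edges, the coordinates [c >= m] thus carry distinct binary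
   codes, which is what rules out coordinate swaps. *)
Definition code_vertex (r : 'I_n) : qvert n :=
  [ffun c : 'I_n => [&& m <= c, 0 < r & bit r.-1 (c - m)]].

Definition code_edge (r : 'I_n) : {set qvert n} :=
  [set code_vertex r; flip r (code_vertex r)].

Definition code_edges : {set {set qvert n}} :=
  [set code_edge (widen_ord mn r) | r : 'I_m].

Lemma card_code_edges : #|code_edges| = m.
Proof.
rewrite card_imset ?card_ord // => a b /eq_edge_dir /(congr1 val) ab.
exact: val_inj.
Qed.

Lemma code_edges_sub : code_edges \subset qedges n.
Proof.
apply/subsetP => _ /imsetP [r _ ->]; rewrite inE.
set r' := widen_ord mn r; apply/existsP; exists (code_vertex r').
apply/existsP; exists (flip r' (code_vertex r')).
by rewrite eqxx andbT; apply/qadjP; exists r'.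
Qed.

Section FixingAffine.

Variables (s : {perm 'I_n}) (t : qvert n).
Hypothesis fix_code : forall r : 'I_n, r < m -> affine s t @: code_edge r = code_edge r.
Hypotheses (m_gt1 : 1 < m) (n_le : n <= det_capacity m).

Lemma fixing_low_dir (r : 'I_n) : r < m -> s r = r.
Proof. by move=> rm; case: (affine_fix_edge (fix_code rm)). Qed.

Lemma fixing_coord (r c : 'I_n) : r < m -> c != r ->
  code_vertex r (s c) (+) t c = code_vertex r c.
Proof.
by move=> rm cr; case: (affine_fix_edge (fix_code rm)) => _ /(_ c cr); rewrite ffunE.
Qed.

Lemma fixing_high_coord (c : 'I_n) : m <= c -> s c = c /\ t c = false.
Proof.
move=> mc.
have tc : t c = false.
  pose r : 'I_n := Ordinal (ltac:(lia) : 0 < n).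
  have rm : r < m by rewrite /=; lia.
  have cr : c != r by apply/eqP => /(congr1 val) /=; lia.
  by have := fixing_coord rm cr; rewrite !ffunE /= !andbF.
split=> //.
have mc' : m <= s c.
  rewrite leqNgt; apply/negP => scm.
  by have /perm_inj E := fixing_low_dir scm; move: scm; rewrite E; lia.
apply: val_inj => /=.
suff : s c - m = c - m by lia.
have := ltn_ord (s c); have := ltn_ord c => lt_c lt_sc.
have n_bound : n <= 2 ^ m.-1 + m := n_le.
apply: (@bits_inj m.-1); [lia | lia | move=> i im].
pose r : 'I_n := Ordinal (ltac:(lia) : i.+1 < n).
have rm : r < m by rewrite /=; lia.
have cr : c != r by apply/eqP => /(congr1 val) /=; lia.
have := fixing_coord rm cr.
by rewrite !ffunE tc addbF mc mc'.
Qed.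

Lemma fixing_affine_trivial : s = 1%g /\ t = qzero n.
Proof.
have s1 : s = 1%g.
  apply/permP => c; rewrite perm1.
  by case: (leqP m c) => [/fixing_high_coord [] | /fixing_low_dir].
split=> //; apply/ffunP => c; rewrite ffunE.
case: (leqP m c) => [/fixing_high_coord [] // | cm].
pose r : 'I_n := Ordinal (ltac:(lia) : (c == 0 :> nat) < n).
have rm : r < m by rewrite /=; lia.
have cr : c != r by apply/eqP => /(congr1 val) /=; lia.
have := fixing_coord rm cr.
by rewrite s1 perm1 ffunE leqNgt cm.
Qed.

End FixingAffine.

Lemma code_edges_determining : 1 < m -> n <= det_capacity m -> edge_determining code_edges.
Proof.
move=> m_gt1 n_le; rewrite /edge_determining code_edges_sub /=.
apply/forallP => f; apply/implyP => /andP [/qaut_affine [s [t fE]] /forallP fe].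
have fix_code (r : 'I_n) : r < m -> affine s t @: code_edge r = code_edge r.
  move=> rm; have /implyP := fe (code_edge r).
  have -> : code_edge r \in code_edges.
    by apply/imsetP; exists (Ordinal rm) => //; congr code_edge; apply: val_inj.
  by move=> /(_ isT) /eqP {2}<-; apply: eq_imset => x; rewrite fE.
have [s1 t0] := fixing_affine_trivial fix_code m_gt1 n_le.
apply/eqP/permP => x; rewrite perm1 fE s1 t0.
by apply/ffunP => c; rewrite !ffunE perm1 addbF.
Qed.

End Construction.

Lemma swap_not_determining n (T : {set {set qvert n}}) (i j : 'I_n) b : i != j ->
  (forall e x, e \in T -> x \in e -> x i (+) x j = b) -> ~~ edge_determining T.
Proof.
move=> ij ijT.
pose tb : qvert n := [ffun c => b && ((c == i) || (c == j))].
pose phi := perm (@affine_inj n (tperm i j) tb).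
have phiE x : phi x = affine (tperm i j) tb x by rewrite permE.
have phi_fix (x : qvert n) : x i (+) x j = b -> phi x = x.
  move=> bx; apply/ffunP => c; rewrite phiE !ffunE.
  case: (tpermP i j c) => [-> | -> | /eqP ci /eqP cj].
  - by rewrite eqxx andbT -bx; case: (x i); case: (x j).
  - by rewrite eqxx orbT andbT -bx; case: (x i); case: (x j).
  - by rewrite (negbTE ci) (negbTE cj) andbF addbF.
apply/negP => /andP [_ /forallP /(_ phi) /implyP].
have -> : qaut phi by apply/forallP => u; apply/forallP => v; rewrite !phiE affine_adj.
have -> /= : [forall e in T, phi @: e == e].
  apply/forallP => e; apply/implyP => eT; apply/eqP; rewrite -[RHS]imset_id.
  by apply: eq_in_imset => x xe; apply: phi_fix; apply: ijT eT xe.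
(* [phi] moves a vertex [x] with [x i (+) x j != b]. *)
move=> /(_ isT) /eqP /permP /(_ (if b then qzero n else flip i (qzero n))).
rewrite perm1 phiE => /ffunP /(_ i); rewrite !ffunE /tb tpermL eqxx /=.
by case: (b); rewrite !ffunE //= eq_sym (negbTE ij) eqxx.
Qed.

Section LowerBound.

Variables (n : nat) (T : {set {set qvert n}}).

Definition edge_moving (e : {set qvert n}) : {set 'I_n} :=
  [set c | [exists x in e, exists y in e, x c != y c]].

Definition moving_coords : {set 'I_n} := \bigcup_(e in T) edge_moving e.

Lemma card_moving_coords : T \subset qedges n -> #|moving_coords| <= #|T|.
Proof.
move=> TQ.
have le1 e : e \in T -> #|edge_moving e| <= 1.
  move=> eT; have [u [a Ee]] := qedgesP (subsetP TQ e eT).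
  rewrite -(cards1 a); apply: subset_leq_card; apply/subsetP => c.
  rewrite !inE => /exists_inP [x xe /exists_inP [y ye]]; rewrite Ee in xe ye.
  by move/(edge_coord xe ye) => ->.
apply: (@leq_trans (\sum_(e in T) 1)); last by rewrite sum1_card.
apply: (@big_rec2 {set 'I_n} nat (fun S k => #|S| <= k)) => [|e S k eT IH].
  by rewrite cards0.
by have := le1 e eT; rewrite cardsU; lia.
Qed.

Lemma coord_const e x y c : c \notin moving_coords -> e \in T -> x \in e -> y \in e ->
  x c = y c.
Proof.
move=> cM eT xe ye; apply/eqP; apply: contraNT cM => xy; apply/bigcupP; exists e => //.
by rewrite inE; apply/exists_inP; exists x => //; apply/exists_inP; exists y.
Qed.

Definition profile (y0 : qvert n) (c : 'I_n) : {set {set qvert n}} :=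
  [set e in T | [exists x in e, x c != y0 c]].

Lemma profile_swap y0 i j : i \notin moving_coords -> j \notin moving_coords ->
  i != j -> profile y0 i = profile y0 j -> ~~ edge_determining T.
Proof.
move=> iM jM ij /setP Pij.
apply: (@swap_not_determining _ _ i j (y0 i (+) y0 j)) => // e x eT xe.
have inP c : c \notin moving_coords -> (e \in profile y0 c) = (x c != y0 c).
  move=> cM; rewrite inE eT; apply/exists_inP/idP => [[z ze] | ?]; last by exists x.
  by rewrite (coord_const cM eT ze xe).
move: (Pij e); rewrite (inP i iM) (inP j jM).
by case: (x i); case: (x j); case: (y0 i); case: (y0 j).
Qed.

Lemma determining_card_bound : edge_determining T -> 1 < n -> n <= det_capacity #|T|.
Proof.
move=> dT n_gt1; have TQ : T \subset qedges n by case/andP: dT.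
have [T0 | [e0 e0T]] := set_0Vmem T.
  move: dT; apply: contraLR => _.
  apply: (@swap_not_determining _ _ (Ordinal (ltnW n_gt1)) (Ordinal n_gt1) false) => //.
  by move=> e x; rewrite T0 inE.
have [y0 [a0 Ee0]] := qedgesP (subsetP TQ e0 e0T).
have y0e0 : y0 \in e0 by rewrite Ee0 setU11.
have prof_sub : [set profile y0 c | c in ~: moving_coords] \subset powerset (T :\ e0).
  apply/subsetP => _ /imsetP [c cM ->]; rewrite inE; apply/subsetP => e.
  rewrite !inE => /andP [eT /exists_inP [x xe]]; rewrite eT andbT.
  apply: contra_neq => ee0; rewrite ee0 in xe.
  by apply: coord_const xe y0e0; rewrite // -in_setC.
have prof_inj : {in ~: moving_coords &, injective (profile y0)}.
  move=> i j; rewrite !in_setC => iM jM Pij; apply/eqP; apply: contraT => ij.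
  by rewrite (negbTE (profile_swap iM jM ij Pij)) in dT.
have card_free : #|~: moving_coords| <= 2 ^ #|T|.-1.
  have := subset_leq_card prof_sub.
  by rewrite card_in_imset // card_powerset (cardsD1 e0 T) e0T.
have := cardsC moving_coords; rewrite card_ord.
have := card_moving_coords TQ; rewrite /det_capacity.
move: card_free; move: #|moving_coords| #|~: moving_coords| (2 ^ _) => *; lia.
Qed.

End LowerBound.

Lemma leq_det_capacity : {homo det_capacity : s t / s <= t}.
Proof.
move=> s t st; apply: leq_add => //.
by apply: leq_pexp2l => //; rewrite -!subn1 leq_sub2r.
Qed.

Lemma det_capacity_le_exp t : det_capacity t <= 2 ^ t.
Proof.
case: t => [|t] //; rewrite /det_capacity expnS mul2n -addnn leq_add2l.
exact: ltn_expl.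
Qed.

Lemma geq_bigmin_cond (I : finType) (P : pred I) (F : I -> nat) d i :
  P i -> \big[minn/d]_(j | P j) F j <= F i.
Proof.
move=> Pi; have : i \in index_enum I by rewrite mem_index_enum.
elim: (index_enum I) => // x r IH; rewrite inE big_cons => /orP [/eqP <- | /IH le_i].
  by rewrite Pi geq_minl.
by case: (P x); rewrite // geq_min le_i orbT.
Qed.

Lemma det_index_eq n m : 1 < m -> det_capacity m.-1 < n <= det_capacity m ->
  det_index n = m.
Proof.
move=> m_gt1 /andP [lo hi].
have mn : m <= n.
  apply: leq_trans lo; rewrite /det_capacity.
  by have := expn_gt0 2 m.-2; lia.
have n_gt1 : 1 < n by lia.
have code_det := code_edges_determining mn m_gt1 hi.
apply/eqP; rewrite eqn_leq; apply/andP; split.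
  by rewrite -[leqRHS](card_code_edges mn); apply: geq_bigmin_cond.
apply: (big_ind (fun x => m <= x)) => [|x y mx my|T T_det].
- by rewrite -(card_code_edges mn) subset_leq_card // code_edges_sub.
- by rewrite leq_min mx my.
rewrite leqNgt; apply/negP => T_lt.
have T_le : #|T| <= m.-1 by lia.
have := leq_trans (determining_card_bound T_det n_gt1) (leq_det_capacity T_le).
by rewrite leqNgt lo.
Qed.

Theorem corollary3 (n : nat) : 3 <= n ->
  let k := up_log 2 n in
  ((2 ^ k.-1 < n <= 2 ^ k.-1 + k) -> det_index n = k) /\
  ((2 ^ k.-1 + k < n <= 2 ^ k) -> det_index n = k.+1).
Proof.
move=> n_ge3 k.
have n_le : n <= 2 ^ k by apply: up_logP.
have k_gt1 : 1 < k.
  rewrite ltnNge; apply/negP => /(leq_pexp2l (isT : 0 < 2)) k_le.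
  by have := leq_trans n_le k_le; rewrite expn1; lia.
split => /andP [lo hi].
- apply: det_index_eq => //; apply/andP; split; last exact: hi.
  exact: leq_ltn_trans (det_capacity_le_exp _) lo.
- apply: det_index_eq; first by rewrite ltnS ltnW.
  by rewrite lo (leq_trans n_le) // leq_addr.
Qed.
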